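(* Let $n \ge k \ge 2$ be integers, let $B^n$ be the open unit ball in $\mathbb{R}^n$, and fix $y \in B^n$. Define the vector field $W$ on $B^n \setminus \{y\}$ as follows, writing $Q(x) = \frac{1-2\langle x,y\rangle + |y|^2}{|x-y|^2}$ (note $Q(x) \geq 1$ on $B^n\setminus\{y\}$). For $k>2$, \[ W(x) = -\frac{1}{k}\big(Q(x)^{\frac{k}{2}} - 1\big)(x-y) + \frac{1}{k-2}\big(Q(x)^{\frac{k-2}{2}} - 1\big)\, y, \] and for $k=2$, \[ W(x) = -\frac{1}{2}\big(Q(x) - 1\big)(x-y) + \frac{1}{2}\log\big(Q(x)\big)\, y. \] Then for every point $x \in B^n \setminus \{y\}$ and every orthonormal $k$-frame $\{e_1,\dots,e_k\} \subset \mathbb{R}^n$, \[ \sum_{i=1}^k \langle D_{e_i} W, e_i\rangle \leq 1, \] where $D$ denotes the standard directional derivative in $\mathbb{R}^n$. *)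

From HB Require Import structures.
From mathcomp Require Import all_boot all_order all_algebra.
From mathcomp Require Import all_classical all_reals all_analysis.
Set Implicit Arguments. Unset Strict Implicit. Unset Printing Implicit Defensive.
Import Order.TTheory GRing.Theory Num.Theory.
Import numFieldNormedType.Exports.
Local Open Scope ring_scope.

Definition dotv {R : realType} {n : nat} (u v : 'rV[R]_n) : R :=
  \sum_(j < n) u 0 j * v 0 j.

Definition Qfun {R : realType} {n : nat} (y x : 'rV[R]_n) : R :=
  (1 - 2 * dotv x y + dotv y y) / dotv (x - y) (x - y).

Definition Wfield {R : realType} {n : nat} (k : nat) (y x : 'rV[R]_n)
  : 'rV[R]_n :=
  if (2 < k)%N then
    (- (k%:R)^-1 * (powR (Qfun y x) (k%:R / 2) - 1)) *: (x - y)
    + ((k%:R - 2)^-1 * (powR (Qfun y x) ((k%:R - 2) / 2) - 1)) *: y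
  else
    (- 2^-1 * (Qfun y x - 1)) *: (x - y) + (2^-1 * ln (Qfun y x)) *: y.

From HB Require Import structures.
From mathcomp Require Import all_boot all_order all_algebra.
From mathcomp Require Import all_classical all_reals all_analysis.
From mathcomp Require Import ring lra.
Import Order.TTheory GRing.Theory Num.Theory.
Import numFieldNormedType.Exports.
Local Open Scope ring_scope.

(* W(x) = a(Q)(x - y) + b(Q) y, where in both cases b' = -a'/Q and
   -2 Q a'(Q) = P := Q^(k/2).  Along any direction e, Q has derivative
   -2 (Q <x-y,e> + <y,e>) / |x-y|^2, so the chain rule gives
   <D_e W, e> = a(Q) |e|^2 + P (Q^2 <x-y,e>^2 - <y,e>^2) / (Q^2 |x-y|^2).
   Summing over an orthonormal frame, dropping the terms <y,e_i>^2 and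
   bounding sum_i <x-y,e_i>^2 by |x-y|^2 (Bessel) leaves at most
   k a(Q) + P = (1 - P) + P = 1. *)

Section Dotv.
Context {R : realType} {n : nat}.
Implicit Types u v w : 'rV[R]_n.

Lemma dotvC u v : dotv u v = dotv v u.
Proof. by apply: eq_bigr => j _; rewrite mulrC. Qed.

Lemma dotvDl u v w : dotv (u + v) w = dotv u w + dotv v w.
Proof. by rewrite /dotv -big_split; apply: eq_bigr => j _; rewrite mxE mulrDl. Qed.

Lemma dotvZl (a : R) u w : dotv (a *: u) w = a * dotv u w.
Proof. by rewrite /dotv mulr_sumr; apply: eq_bigr => j _; rewrite mxE mulrA. Qed.

Lemma dotvBl u v w : dotv (u - v) w = dotv u w - dotv v w.
Proof. by rewrite -scaleN1r dotvDl dotvZl mulN1r. Qed.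

Lemma dotvDr u v w : dotv w (u + v) = dotv w u + dotv w v.
Proof. by rewrite dotvC dotvDl !(dotvC w). Qed.

Lemma dotvZr (a : R) u w : dotv w (a *: u) = a * dotv w u.
Proof. by rewrite dotvC dotvZl dotvC. Qed.

Lemma dotvBr u v w : dotv w (u - v) = dotv w u - dotv w v.
Proof. by rewrite dotvC dotvBl !(dotvC w). Qed.

Lemma dotv_suml (k : nat) (F : 'I_k -> 'rV[R]_n) w :
  dotv (\sum_(i < k) F i) w = \sum_(i < k) dotv (F i) w.
Proof.
rewrite /dotv exchange_big; apply: eq_bigr => j _.
by rewrite summxE mulr_suml.
Qed.

Lemma dotv_ge0 u : 0 <= dotv u u.
Proof. by apply: sumr_ge0 => j _; rewrite -expr2 sqr_ge0. Qed.

Lemma dotv_gt0 u : u != 0 -> 0 < dotv u u.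
Proof.
move=> u0; rewrite lt_def dotv_ge0 andbT; apply: contra u0 => /eqP u2_0.
have sq0 j : u 0 j ^+ 2 = 0.
  apply: (psumr_eq0P (P := xpredT) (fun j _ => sqr_ge0 (u 0 j)) _ isT).
  by rewrite -[RHS]u2_0; apply: eq_bigr => l _; rewrite expr2.
apply/eqP/matrixP => i j; rewrite ord1 mxE.
by have /eqP := sq0 j; rewrite expf_eq0 => /eqP.
Qed.

Lemma dotv_bessel {k} {e : 'I_k -> 'rV[R]_n}
    (he : forall i j, dotv (e i) (e j) = (i == j)%:R) d :
  \sum_(i < k) dotv d (e i) ^+ 2 <= dotv d d.
Proof.
set p := \sum_(i < k) dotv d (e i) *: e i.
have p_ei i : dotv p (e i) = dotv d (e i).
  rewrite dotv_suml (bigD1 i) //= dotvZl he eqxx mulr1 big1 ?addr0 //.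
  by move=> j /negbTE ji; rewrite dotvZl he ji mulr0.
have p_d : dotv p d = \sum_(i < k) dotv d (e i) ^+ 2.
  by rewrite dotv_suml; apply: eq_bigr => i _; rewrite dotvZl dotvC expr2.
have p_p : dotv p p = \sum_(i < k) dotv d (e i) ^+ 2.
  rewrite {2}/p dotvC dotv_suml; apply: eq_bigr => i _.
  by rewrite dotvZl (dotvC (e i)) p_ei expr2.
have := dotv_ge0 (d - p).
rewrite dotvBl !dotvBr (dotvC d p) p_d p_p; lra.
Qed.

Lemma sum_dotv_frame_le {k} {e : 'I_k -> 'rV[R]_n}
    (he : forall i j, dotv (e i) (e j) = (i == j)%:R) (d y : 'rV[R]_n) {a c Q : R} :
  0 < Q -> 0 < dotv d d -> 0 <= c ->
  \sum_(i < k) (a * dotv (e i) (e i)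
     + 2 * c * (Q ^+ 2 * dotv d (e i) ^+ 2 - dotv y (e i) ^+ 2) / (Q * dotv d d))
  <= k%:R * a + 2 * c * Q.
Proof.
move=> Q_gt0 r2_gt0 c_ge0; set r2 := dotv d d.
have cQ_ge0 : 0 <= 2 * c * Q / r2.
  by rewrite divr_ge0 ?mulr_ge0 ?(ltW Q_gt0) ?(ltW r2_gt0).
apply: (@le_trans _ _ (\sum_(i < k) (a + 2 * c * Q / r2 * dotv d (e i) ^+ 2))).
  apply: ler_sum => i _; rewrite he eqxx mulr1 lerD2l.
  rewrite (_ : _ / _ = 2 * c * Q / r2 * dotv d (e i) ^+ 2
                       - 2 * c / (Q * r2) * dotv y (e i) ^+ 2); last first.
    by field; rewrite !gt_eqF.
  rewrite gerBl mulr_ge0 ?sqr_ge0 //.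
  by rewrite divr_ge0 ?mulr_ge0 ?(ltW Q_gt0) ?(ltW r2_gt0).
rewrite big_split /= sumr_const card_ord -mulr_sumr -(mulr_natl a k) lerD2l.
apply: le_trans (ler_wpM2l cQ_ge0 (dotv_bessel he d)) _.
by rewrite divfK // gt_eqF.
Qed.

End Dotv.

Section DirectionalDerivative.
Context {R : realType} {V W : normedModType R}.
Local Open Scope classical_set_scope.

Lemma is_deriveZfun (f : V -> R) (g : V -> W) (x v : V) (df : R) (dg : W) :
  is_derive x v f df -> is_derive x v g dg ->
  is_derive x v (fun z => f z *: g z) (f x *: dg + df *: g x).
Proof.
move=> [fd <-] [gd <-].
have Lfg : (fun h => h^-1 *: (((fun z => f z *: g z) \o shift x) (h *: v)
                               - f x *: g x))
    @ 0^' --> f x *: 'D_v g x + 'D_v f x *: g x.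
  rewrite [X in X @ _](_ : _ = fun h =>
      f (h *: v + x) *: (h^-1 *: ((g \o shift x) (h *: v) - g x))
      + (h^-1 *: ((f \o shift x) (h *: v) - f x)) *: g x); last first.
    apply/funext => h /=.
    by rewrite !scalerBr !scalerBl !scalerA [f (_ + x) * _]mulrC addrA subrK.
  apply: cvgD; last exact: cvgZr_tmp fd.
  apply: cvg_comp2 (@scale_continuous _ _ (_, _)) => /=; last exact: gd.
  suff : {for 0, continuous (fun h : R => f (h *: v + x))}.
    by move=> /continuous_withinNx; rewrite scale0r add0r.
  exact/differentiable_continuous/derivable1_diffP/(derivable1P _ _ _).1.
by apply: DeriveDef; [apply/cvg_ex; eexists; exact: Lfg | exact: cvg_lim Lfg].
Qed.

Lemma is_derive1P (f : V -> W) (x v : V) (df : W) :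
  is_derive x v f df <-> is_derive (0 : R) 1 (fun h : R => f (h *: v + x)) df.
Proof.
have quotE : (fun h : R => h^-1 *: ((f \o shift x) (h *: v) - f x)) =
    (fun h => h^-1 *: (((fun h => f (h *: v + x)) \o shift 0) (h *: 1)
                        - f (0 *: v + x))).
  by apply/funext => h /=; rewrite addr0 scale0r add0r [_%:A]mulr1.
split=> -[d <-]; split; rewrite /derivable /derive //;
  by [rewrite quotE | rewrite -quotE].
Qed.

End DirectionalDerivative.
Arguments is_deriveZfun {R V W f g x v df dg}.

Definition Qfield {R : realType} {n : nat} (a b : R -> R) (y z : 'rV[R]_n) :
  'rV[R]_n := a (Qfun y z) *: (z - y) + b (Qfun y z) *: y.

Section Qfield.
Context {R : realType} {n : nat}.
Context {y x : 'rV[R]_n} (xy : x != y).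
Implicit Types e : 'rV[R]_n.

Let r2_gt0 : 0 < dotv (x - y) (x - y).
Proof. by rewrite dotv_gt0 // subr_eq0. Qed.

Lemma Qfun_gt0 : dotv x x < 1 -> 0 < Qfun y x.
Proof.
move=> x1; rewrite /Qfun.
rewrite (_ : 1 - _ + _ = dotv (x - y) (x - y) + (1 - dotv x x)); last first.
  by rewrite dotvBl !dotvBr (dotvC y x); ring.
by apply: divr_gt0 => //; apply: addr_gt0 => //; rewrite subr_gt0.
Qed.

Lemma is_derive_Qfun e :
  is_derive x e (Qfun y)
    (- 2 * (Qfun y x * dotv (x - y) e + dotv y e) / dotv (x - y) (x - y)).
Proof.
apply/is_derive1P.
set r2 := dotv (x - y) (x - y); set A := dotv y e; set B := dotv (x - y) e.
set N0 := 1 - 2 * dotv x y + dotv y y.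
have -> : (fun t : R => Qfun y (t *: e + x)) =
    (fun t => N0 - 2 * A * t) * (fun t => (r2 + 2 * B * t + dotv e e * t ^+ 2)^-1).
  apply/funext => t; rewrite /Qfun /= -(addrA (t *: e)) (dotvDl (t *: e) x).
  rewrite (dotvDl (t *: e) (x - y)) !(dotvDr (t *: e) (x - y)) !dotvZl !dotvZr.
  rewrite (dotvC e y) (dotvC e (x - y)) -/A -/B -/r2 -/N0.
  by congr (_ * _^-1); rewrite ?/N0; ring.
have D0 : r2 + 2 * B * 0 + dotv e e * 0 ^+ 2 != 0.
  by rewrite mulr0 expr0n /= mulr0 !addr0 gt_eqF.
apply: is_derive_eq.
rewrite /Qfun -/N0 -/r2 !mulr0 expr0n /= !mulr0 !addr0 /GRing.scale /=.
by field; rewrite gt_eqF.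
Qed.

Lemma is_derive_Qfield {a b : R -> R} {da db : R} e :
  is_derive (Qfun y x) 1 a da -> is_derive (Qfun y x) 1 b db ->
  let dQ := - 2 * (Qfun y x * dotv (x - y) e + dotv y e) / dotv (x - y) (x - y) in
  is_derive x e (Qfield a b y)
    (a (Qfun y x) *: e + (da * dQ) *: (x - y) + (db * dQ) *: y).
Proof.
move=> a' b' dQ; apply/is_derive1P.
pose q t := Qfun y (t *: e + x).
have /is_derive1P Qline : is_derive x e (Qfun y) dQ := is_derive_Qfun e.
have Q0 : q 0 = Qfun y x by rewrite /q scale0r add0r.
rewrite -Q0 in a' b'.
have line : is_derive (0 : R) 1 (fun t : R => t *: e + (x - y)) e.
  have := is_deriveD
    (is_deriveZfun (is_derive_id (0 : R) 1) (is_derive_cst e (0 : R) 1))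
    (is_derive_cst (x - y) (0 : R) 1).
  by rewrite scaler0 add0r scale1r addr0.
have a_line := is_deriveZfun (is_derive1_comp (g := q) a' Qline) line.
have b_line :=
  is_deriveZfun (is_derive1_comp (g := q) b' Qline) (is_derive_cst y (0 : R) 1).
rewrite (_ : (fun t => _) =
    (fun t : R => a (q t) *: (t *: e + (x - y)) + b (q t) *: y)); last first.
  by apply/funext => t; rewrite /Qfield addrA.
apply: is_derive_eq.
by rewrite /= /q scale0r scaler0 !add0r.
Qed.

Lemma derive_Qfield_dot {a b : R -> R} {c : R} e : Qfun y x != 0 ->
    is_derive (Qfun y x) 1 a (- c) -> is_derive (Qfun y x) 1 b (c / Qfun y x) ->
  dotv ('D_e (Qfield a b y) x) e =
    a (Qfun y x) * dotv e e
    + 2 * c * (Qfun y x ^+ 2 * dotv (x - y) e ^+ 2 - dotv y e ^+ 2)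
      / (Qfun y x * dotv (x - y) (x - y)).
Proof.
move=> Q_neq0 a' b'.
have [_ ->] := is_derive_Qfield e a' b'.
rewrite [dotv (_ + _ *: y) e]dotvDl [dotv (_ *: e + _) e]dotvDl !dotvZl.
by field; rewrite Q_neq0 gt_eqF.
Qed.

End Qfield.

Section Wcoef.
Context {R : realType}.
Variables (k : nat).
Hypothesis k_ge2 : (2 <= k)%N.

Definition Wa (q : R) : R :=
  if (2 < k)%N then - (k%:R)^-1 * (q `^ (k%:R / 2) - 1) else - 2^-1 * (q - 1).

Definition Wb (q : R) : R :=
  if (2 < k)%N then (k%:R - 2)^-1 * (q `^ ((k%:R - 2) / 2) - 1)
  else 2^-1 * ln q.

Lemma WfieldE {n} (y : 'rV[R]_n) : Wfield k y = Qfield Wa Wb y.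
Proof. by apply/funext => z; rewrite /Wfield /Qfield /Wa /Wb; case: ifP. Qed.

Let k_neq0 : (k%:R : R) != 0.
Proof. by rewrite pnatr_eq0 -lt0n (leq_trans _ k_ge2). Qed.

Let k_eq2 : ~~ (2 < k)%N -> k = 2%N.
Proof. by rewrite -leqNgt => k_le2; apply/eqP; rewrite eqn_leq k_le2. Qed.

Lemma mulr_Wa (q : R) : 0 <= q -> k%:R * Wa q = 1 - q `^ (k%:R / 2).
Proof.
move=> q_ge0.
rewrite /Wa; case: ifPn => [_|/k_eq2 ->]; first by field.
by rewrite divff // powRr1 //; field.
Qed.

Lemma is_derive_Wa (q : R) : 0 < q -> is_derive q 1 Wa (- (q `^ (k%:R / 2) / (2 * q))).
Proof.
move=> q_gt0; rewrite /Wa; case: (boolP (2 < k)%N) => [k_gt2|/k_eq2 k2] /=.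
  have := is_deriveZ (- k%:R^-1) (is_deriveB (is_derive1_powR (k%:R / 2) q_gt0)
                                     (is_derive_cst (1 : R) q 1)).
  move/is_derive_eq; apply.
  rewrite subr0 powRB; last by apply/implyP => _; rewrite gt_eqF.
  by rewrite (powRr1 (ltW q_gt0)) /GRing.scale /=; field; rewrite gt_eqF.
apply: is_derive_eq.
by rewrite k2 divff // (powRr1 (ltW q_gt0)) subr0 /GRing.scale /=; field; rewrite gt_eqF.
Qed.

Lemma is_derive_Wb (q : R) : 0 < q -> is_derive q 1 Wb (q `^ (k%:R / 2) / (2 * q) / q).
Proof.
move=> q_gt0; rewrite /Wb; case: (boolP (2 < k)%N) => [k_gt2|/k_eq2 k2] /=.
  have k2_neq0 : (k%:R - 2 : R) != 0 by rewrite subr_eq0 gt_eqF // ltr_nat.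
  have := is_deriveZ ((k%:R - 2)^-1)
    (is_deriveB (is_derive1_powR ((k%:R - 2) / 2) q_gt0) (is_derive_cst (1 : R) q 1)).
  move/is_derive_eq; apply.
  rewrite subr0 (_ : (k%:R - 2) / 2 - 1 = k%:R / 2 - 2%:R); last by field.
  rewrite powRB; last by apply/implyP => _; rewrite gt_eqF.
  by rewrite (powR_mulrn _ (ltW q_gt0)) /GRing.scale /=; field; rewrite gt_eqF.
have := is_deriveZ (2^-1) (is_derive1_ln q_gt0).
move/is_derive_eq; apply.
by rewrite k2 divff // (powRr1 (ltW q_gt0)) /GRing.scale /=; field; rewrite gt_eqF.
Qed.

End Wcoef.
Arguments mulr_Wa {R k} k_ge2 {q}.
Arguments is_derive_Wa {R k} k_ge2 {q}.
Arguments is_derive_Wb {R k} k_ge2 {q}.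

(* Only |x| < 1 matters, through Q(x) > 0. *)
Theorem lemma2p1 (R : realType) (n k : nat) (hk : (2 <= k)%N) (hkn : (k <= n)%N)
  (y : 'rV[R]_n) (hy : dotv y y < 1)
  (x : 'rV[R]_n) (hx : dotv x x < 1) (hxy : x != y)
  (e : 'I_k -> 'rV[R]_n)
  (he : forall i j : 'I_k, dotv (e i) (e j) = (i == j)%:R) :
  \sum_(i < k) dotv ('D_(e i) (Wfield k y) x) (e i) <= 1.
Proof.
have Q_gt0 := Qfun_gt0 hxy hx.
have r2_gt0 : 0 < dotv (x - y) (x - y) by rewrite dotv_gt0 // subr_eq0.
set P := Qfun y x `^ (k%:R / 2).
have c_ge0 : 0 <= P / (2 * Qfun y x).
  by rewrite divr_ge0 ?powR_ge0 // mulr_ge0 // ltW.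
rewrite WfieldE.
under eq_bigr => i _ do rewrite (derive_Qfield_dot hxy _ (lt0r_neq0 Q_gt0)
  (is_derive_Wa hk Q_gt0) (is_derive_Wb hk Q_gt0)).
apply: le_trans (sum_dotv_frame_le he _ _ Q_gt0 r2_gt0 c_ge0) _.
rewrite (mulr_Wa hk (ltW Q_gt0)) -/P.
have -> : 2 * (P / (2 * Qfun y x)) * Qfun y x = P by field; rewrite gt_eqF.
by rewrite subrK.
Qed.
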